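(* Let $n\ge 3$. The resolving polynomial of the power graph $P(G(n))$ of the gyrogroup $G(n)$ (defined in the context) is $$\psi(P(G(n)),x)=x^{2^n}+2^n x^{2^n-1}+(2^{2n-2}+2^{n-1}-1)x^{2^n-2}+(2^{2n-2}-2^{n-1})x^{2^n-3}.$$
   Context: Let $n\ge 3$ be an integer and $m=2^{n-1}$. Let $P(n)=\{0,1,\dots,m-1\}$, $H(n)=\{m,m+1,\dots,2^n-1\}$ and $G(n)=P(n)\cup H(n)$. For $i,j\in G(n)$ let $t,s,k\in P(n)$ be the residues modulo $m$ (taken in $\{0,\dots,m-1\}$) of $i+j$, $i+(\frac m2-1)j$ and $(\frac m2+1)i+(\frac m2-1)j$, respectively, and define $i\oplus j=t$ if $i,j\in P(n)$; $i\oplus j=t+m$ if $i\in P(n),j\in H(n)$; $i\oplus j=s+m$ if $i\in H(n),j\in P(n)$; $i\oplus j=k$ if $i,j\in H(n)$. Then $(G(n),\oplus)$ is a gyrogroup with identity $e=0$. Powers are defined by $a^1=a$, $a^{k+1}=a^k\oplus a$. The power graph $P(G(n))$ is the simple undirected graph with vertex set $G(n)$ in which distinct vertices $u,v$ are adjacent if and only if $u^k=v$ or $v^k=u$ for some positive integer $k$. For a connected graph $G$ and an ordered set $U=\{u_1,\dots,u_s\}\subseteq V(G)$, the representation of $v$ is $r(v|U)=(d(v,u_1),\dots,d(v,u_s))$; $U$ is a resolving set if distinct vertices have distinct representations, and the metric dimension $\psi(G)$ is the minimum size of a resolving set. If $|V(G)|=N$ and $r_k$ denotes the number of resolving sets of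 $G$ of cardinality $k$, the resolving polynomial is $\psi(G,x)=\sum_{k=\psi(G)}^{N} r_k x^k$. *)

From mathcomp Require Import all_boot all_order all_algebra.
From Stdlib Require Import ClassicalEpsilon.
Set Implicit Arguments. Unset Strict Implicit. Unset Printing Implicit Defensive.
Import GRing.Theory.

(* The gyrogroup G(n) on {0,...,2^n-1}, m = 2^(n-1); operation on naturals. *)
Definition gm (n : nat) : nat := 2 ^ n.-1.

Definition gyro_op (n i j : nat) : nat :=
  let m := gm n in
  let t := (i + j) %% m in
  let s := (i + (m %/ 2 - 1) * j) %% m in
  let k := ((m %/ 2 + 1) * i + (m %/ 2 - 1) * j) %% m in
  if i < m then (if j < m then t else t + m)
  else (if j < m then s + m else k).

(* a^k with a^1 = a, a^(k+1) = a^k (+) a  (meaningful for k >= 1) *)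
Definition gyro_pow (n a k : nat) : nat := iter k.-1 (fun x => gyro_op n x a) a.

Notation vert n := 'I_(2 ^ n).

Definition power_adj (n : nat) (u v : vert n) : Prop :=
  u <> v /\ exists k : nat, 0 < k /\
    (gyro_pow n u k = v \/ gyro_pow n v k = u).

Definition power_adjb (n : nat) : rel (vert n) :=
  fun u v => if excluded_middle_informative (power_adj u v) then true else false.

Definition walkb (n k : nat) (u v : vert n) : bool :=
  [exists p : k.-tuple (vert n), path (@power_adjb n) u p && (last u p == v)].

(* graph distance (the graph is connected, so a shortest walk has length < 2^n) *)
Definition gdist (n : nat) (u v : vert n) : nat :=
  \big[minn/#|vert n|]_(k < #|vert n| | walkb k u v) k.

Definition resolving (n : nat) (U : {set vert n}) : bool :=
  [forall v : vert n, forall w : vert n,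
     (v != w) ==> [exists u in U, gdist v u != gdist w u]].

Definition metric_dim (n : nat) : nat :=
  \big[minn/#|vert n|]_(U : {set vert n} | resolving U) #|U|.

Definition num_resolving (n k : nat) : nat :=
  #|[set U : {set vert n} | resolving U && (#|U| == k)]|.

Definition resolving_poly (n : nat) : {poly int} :=
  \sum_(metric_dim n <= k < (#|vert n|).+1) (num_resolving n k)%:R *: 'X^k.

From mathcomp Require Import all_boot all_order all_algebra.
From mathcomp Require Import zify ring.
From Stdlib Require Import ClassicalEpsilon.
Import Order.TTheory GRing.Theory.
Set Implicit Arguments. Unset Strict Implicit. Unset Printing Implicit Defensive.

(* Write m = 2^(n-1). On P(n) the gyrogroup powers are the multiples k a mod m, and
   any two nonzero elements of the cyclic 2-group Z/m are multiples of one another;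
   an element a of H(n) only has the powers a and 0. Hence distinct vertices are
   adjacent iff both lie in P(n) or one of them is 0, the graph has diameter 2, the
   nonzero elements of P(n) are pairwise twins and so are the elements of H(n).
   A set is therefore resolving iff it misses at most one vertex of each of these
   two classes, and splitting subsets along {0} + P(n)\{0} + H(n) factors the
   generating function of resolving sets as
   (x^m + m x^(m-1)) (x^(m-1) + (m-1) x^(m-2)) (1 + x). *)

Lemma gm_gt0 n : 0 < gm n.
Proof. exact: expn_gt0. Qed.

Lemma gm_ge4 n : 3 <= n -> 4 <= gm n.
Proof.
move=> hn; rewrite /gm -(subnKC (_ : 2 <= n.-1)); last by lia.
by rewrite expnD leq_pmulr // expn_gt0.
Qed.

Lemma expn_gm n : 0 < n -> 2 ^ n = 2 * gm n.
Proof. by move=> hn; rewrite /gm -expnS prednK. Qed.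

Lemma gm_half_sum n : gm n %/ 2 + 1 + (gm n %/ 2 - 1) = gm n.
Proof.
by rewrite /gm; case: n.-1 => [|e] //; rewrite expnS mulKn //; have := expn_gt0 2 e; lia.
Qed.

Lemma gyro_op_ge_diag n a : gm n <= a -> gyro_op n a a = 0.
Proof. by move=> ha; rewrite /gyro_op ltnNge ha /= -mulnDl gm_half_sum modnMr. Qed.

Lemma gyro_pow_lt n a k : 0 < k -> a < gm n -> gyro_pow n a k = (k * a) %% gm n.
Proof.
case: k => // k _ ha; rewrite /gyro_pow /=.
elim: k => [|k IH] /=; first by rewrite mul1n modn_small.
by rewrite IH /gyro_op ltn_pmod ?gm_gt0 // ha modnDml mulSn addnC.
Qed.

Lemma gyro_pow_ge n a k : gm n <= a < 2 * gm n -> 0 < k ->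
  gyro_pow n a k = if odd k then a else 0.
Proof.
move=> /andP[ha ha2]; case: k => // k _; rewrite /gyro_pow /=.
elim: k => [|k IH] //=; rewrite IH; case: (odd k) => /=; last exact: gyro_op_ge_diag.
rewrite /gyro_op gm_gt0 ltnNge ha /= add0n.
by rewrite -{1}(subnK ha) modnDr modn_small ?subnK //; lia.
Qed.

Lemma modn_mul_solvable m u v : 0 < m -> 0 < u -> gcdn u m %| v ->
  exists2 k, 0 < k & k * u = v %[mod m].
Proof.
move=> m_gt0 u_gt0 /dvdnP[c ->]; have [a b def _] := egcdnP m u_gt0.
exists (a * c + m); first lia.
have -> : (a * c + m) * u = (c * b + u) * m + c * gcdn u m.
  have : c * (a * u) = c * (b * m + gcdn u m) by rewrite def.
  lia.
by rewrite modnMDl.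
Qed.

(* The gcds of u and v with 2^e are powers of 2, so one of them divides the other. *)
Lemma pow2_mul_modn_comparable e u v : 0 < u < 2 ^ e -> 0 < v < 2 ^ e ->
  exists2 k, 0 < k & (k * u) %% 2 ^ e = v \/ (k * v) %% 2 ^ e = u.
Proof.
move=> /andP[u_gt0 ltu] /andP[v_gt0 ltv].
wlog duv : u v u_gt0 v_gt0 ltu ltv / gcdn u (2 ^ e) %| gcdn v (2 ^ e).
  move=> base; have pr2 : prime 2 by [].
  have /(dvdn_pfactor _ _ pr2)[a _ ea] := dvdn_gcdr u (2 ^ e).
  have /(dvdn_pfactor _ _ pr2)[b _ eb] := dvdn_gcdr v (2 ^ e).
  have [le_ab | /ltnW le_ba] := leqP a b.
    by apply: base; rewrite // ea eb dvdn_exp2l.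
  have dvu : gcdn v (2 ^ e) %| gcdn u (2 ^ e) by rewrite ea eb dvdn_exp2l.
  have [k k_gt0 ek] := base v u v_gt0 u_gt0 ltv ltu dvu.
  by exists k; last apply/or_comm.
have [k k_gt0 ek] := modn_mul_solvable (expn_gt0 2 e) u_gt0 (dvdn_trans duv (dvdn_gcdl _ _)).
by exists k => //; left; rewrite ek modn_small.
Qed.

Definition power_related n (u v : nat) : bool :=
  [|| (u < gm n) && (v < gm n), u == 0 | v == 0].

Lemma power_relatedC n u v : power_related n u v = power_related n v u.
Proof. by rewrite /power_related andbC [(u == 0) || _]orbC. Qed.

Lemma power_related_pow n a k : a < 2 * gm n -> 0 < k ->
  gyro_pow n a k != a -> power_related n a (gyro_pow n a k).
Proof.
move=> lta k_gt0; have [ltam | geam] := ltnP a (gm n).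
  by rewrite gyro_pow_lt // /power_related ltam ltn_pmod ?gm_gt0.
by rewrite gyro_pow_ge ?geam //; case: odd; rewrite ?eqxx // /power_related eqxx !orbT.
Qed.

Lemma gyro_pow_eq0 n a : a < 2 * gm n -> exists2 k, 0 < k & gyro_pow n a k = 0.
Proof.
move=> lta; have [ltam | geam] := ltnP a (gm n).
  by exists (gm n); rewrite ?gyro_pow_lt ?gm_gt0 ?modnMr.
by exists 2; rewrite // gyro_pow_ge ?geam.
Qed.

Lemma gyro_pow_comparable n u v : 0 < u < gm n -> 0 < v < gm n ->
  exists2 k, 0 < k & gyro_pow n u k = v \/ gyro_pow n v k = u.
Proof.
move=> /[dup] /andP[_ ltu] Hu /[dup] /andP[_ ltv] Hv.
have [k k_gt0 ek] := pow2_mul_modn_comparable Hu Hv.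
by exists k; rewrite // !gyro_pow_lt.
Qed.

Lemma ltn_vert n (u : vert n) : u < 2 * gm n.
Proof. by rewrite /gm -expnS (leq_trans (ltn_ord u)) // leq_pexp2l // leqSpred. Qed.

Lemma power_adjP n (u v : vert n) : power_adj u v <-> u <> v /\ power_related n u v.
Proof.
split=> [[uv [k [k_gt0 Hk]]] | [uv Huv]]; split=> //.
  have rel_pow (a b : vert n) : a <> b -> gyro_pow n a k = b -> power_related n a b.
    move=> ab eab; rewrite -eab power_related_pow ?ltn_vert // eab.
    by apply/eqP => /val_inj ba; apply: ab.
  case: Hk => [/(rel_pow u v uv) // | /(rel_pow v u) rel_vu].
  by rewrite power_relatedC; apply: rel_vu => vu; apply: uv.
have [u0 | u_neq0] := eqVneq (val u) 0.
  have [k k_gt0 Hk] := gyro_pow_eq0 (ltn_vert v).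
  by exists k; split=> //; right; rewrite Hk u0.
have [v0 | v_neq0] := eqVneq (val v) 0.
  have [k k_gt0 Hk] := gyro_pow_eq0 (ltn_vert u).
  by exists k; split=> //; left; rewrite Hk v0.
move: Huv; rewrite /power_related (negbTE u_neq0) (negbTE v_neq0) !orbF => /andP[ltu ltv].
have [|//|k k_gt0 Hk] := @gyro_pow_comparable n u v; first by rewrite lt0n u_neq0.
  by rewrite lt0n v_neq0.
by exists k.
Qed.

Lemma power_adjbE n (u v : vert n) : power_adjb u v = (u != v) && power_related n u v.
Proof.
rewrite /power_adjb; case: excluded_middle_informative => [/power_adjP[/eqP-> ->] //|Nadj].
by apply/esym/negbTE/andP => -[/eqP uv Huv]; apply/Nadj/power_adjP.
Qed.

Lemma walkb0 n (u v : vert n) : walkb 0 u v = (u == v).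
Proof.
apply/existsP/eqP => [[p]|<-]; last by exists [tuple] => /=.
by case: p => -[] //= _ /eqP.
Qed.

Lemma walkb1 n (u v : vert n) : walkb 1 u v = power_adjb u v.
Proof.
apply/existsP/idP => [[[[|w [|? ?]] //= _] /andP[/andP[uw _] /eqP <-]] // | uv].
by exists [tuple v]; rewrite /= uv eqxx.
Qed.

Lemma walkb2 n (u w v : vert n) : power_adjb u w -> power_adjb w v -> walkb 2 u v.
Proof. by move=> uw wv; apply/existsP; exists [tuple w; v]; rewrite /= uw wv eqxx. Qed.

Lemma gdist_eq n (u v : vert n) j : j < 2 ^ n -> walkb j u v ->
  (forall i, i < j -> ~~ walkb i u v) -> gdist u v = j.
Proof.
rewrite -[2 ^ n]card_ord => ltj wj minj; apply/eqP; rewrite eqn_leq.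
have -> : gdist u v <= j.
  have := @bigmin_le_cond _ nat _ #|vert n| (Ordinal ltj) (fun i : 'I__ => walkb i u v).
  by move/(_ val wj).
apply: (@le_bigmin _ nat _ _ _ _ j) => [|i wi]; first exact: ltnW.
by rewrite leEnat leqNgt; apply: contraL wi; apply: minj.
Qed.

Lemma resolving_twins n (S U : {set vert n}) :
  {in S &, forall v w u, u != v -> u != w -> gdist v u = gdist w u} ->
  resolving U -> #|S :\: U| <= 1.
Proof.
move=> twins resU; rewrite leqNgt; apply/negP => /card_gt1P[v [w []]].
rewrite !inE => /andP[vU vS] /andP[wU wS] vw.
have /existsP[u /andP[uU]] := implyP (forallP (forallP resU v) w) vw.
by rewrite (twins v w) ?eqxx //; apply: contraTneq uU => ->.
Qed.

Lemma card_ord_ltn N k : k <= N -> #|[set i : 'I_N | i < k]| = k.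
Proof.
move=> lekN; have inj_widen : injective (widen_ord lekN) by move=> i j [/val_inj].
rewrite -[RHS]card_ord -(card_imset _ inj_widen).
apply: eq_card => i; rewrite inE; apply/idP/imsetP => [ltik | [j _ ->]]; last by case: j.
by exists (Ordinal ltik) => //; apply: val_inj.
Qed.

Lemma meets_of_card_setD_le1 (T : finType) (S U : {set T}) :
  1 < #|S| -> #|S :\: U| <= 1 -> exists2 x, x \in U & x \in S.
Proof.
move=> S_gt1 SU; have : 0 < #|S :&: U| by move: S_gt1; rewrite -(cardsID U S); lia.
by case/card_gt0P => x; rewrite inE => /andP[]; exists x.
Qed.

Lemma exists_vert0 n : exists z : vert n, val z = 0.
Proof. by exists (Ordinal (expn_gt0 2 n)). Qed.

Section PowerGraph.

Variables (n : nat) (hn : 2 < n).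

Lemma gdistE (u v : vert n) :
  gdist u v = if u == v then 0 else if power_related n u v then 1 else 2.
Proof.
have lt2N : 2 < 2 ^ n by rewrite (leq_trans _ (leq_pexp2l _ hn)).
have [-> | uv] := eqVneq u v; first by apply: gdist_eq; rewrite ?walkb0 ?expn_gt0.
have nwalk0 : ~~ walkb 0 u v by rewrite walkb0.
have [rel | Nrel] := ifPn.
  apply: gdist_eq; rewrite ?walkb1 ?power_adjbE ?uv ?rel //; first exact: ltnW.
  by case.
have [z z0] := exists_vert0 n.
have u_neq0 : val u != 0 by apply: contra Nrel => /eqP u0; rewrite /power_related u0 eqxx orbT.
have v_neq0 : val v != 0 by apply: contra Nrel => /eqP v0; rewrite /power_related v0 eqxx !orbT.
apply: gdist_eq => //; last by case=> [|[|]] // _; rewrite walkb1 power_adjbE uv.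
apply: (@walkb2 _ _ z); rewrite power_adjbE /power_related z0 eqxx ?orbT andbT.
  by apply: contra u_neq0 => /eqP->; rewrite z0.
by apply: contra v_neq0 => /eqP<-; rewrite z0.
Qed.

Lemma eq_gdist_offdiag (v w u : vert n) : u != v -> u != w ->
  (gdist v u == gdist w u) = (power_related n v u == power_related n w u).
Proof.
move=> uv uw; rewrite !gdistE ![_ == u]eq_sym (negbTE uv) (negbTE uw).
by do 2!case: power_related.
Qed.

Definition Pstar : {set vert n} := [set u : vert n | 0 < u < gm n].
Definition Hset : {set vert n} := [set u : vert n | gm n <= u].

Lemma power_related_Pstar u (v : vert n) : v \in Pstar -> power_related n u v = (u < gm n).
Proof.
rewrite inE /power_related => /andP[/lt0n_neq0/negbTE-> ->]; rewrite andbT orbF.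
by case: eqP => [->|]; rewrite ?gm_gt0 ?orbF.
Qed.

Lemma power_related_Hset u (v : vert n) : v \in Hset -> power_related n u v = (u == 0).
Proof.
rewrite inE /power_related => lev; rewrite (leq_gtF lev) andbF /=.
by rewrite -[val v == 0]negbK -lt0n (leq_trans (gm_gt0 n) lev) orbF.
Qed.

Lemma Pstar_twins :
  {in Pstar &, forall v w u, u != v -> u != w -> gdist v u = gdist w u}.
Proof.
move=> v w vP wP u uv uw; apply/eqP; rewrite eq_gdist_offdiag //.
by rewrite ![power_related n _ u]power_relatedC !power_related_Pstar.
Qed.

Lemma Hset_twins :
  {in Hset &, forall v w u, u != v -> u != w -> gdist v u = gdist w u}.
Proof.
move=> v w vH wH u uv uw; apply/eqP; rewrite eq_gdist_offdiag //.
by rewrite ![power_related n _ u]power_relatedC !power_related_Hset.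
Qed.

Lemma card_Hset : #|Hset| = gm n.
Proof.
have -> : Hset = ~: [set i : vert n | i < gm n] by apply/setP => i; rewrite !inE -leqNgt.
by rewrite cardsCs setCK card_ord card_ord_ltn expn_gm; lia.
Qed.

Lemma card_Pstar : #|Pstar| = (gm n).-1.
Proof.
have [z z0] := exists_vert0 n.
have -> : Pstar = [set i : vert n | i < gm n] :\ z.
  by apply/setP => i; rewrite !inE -val_eqE z0 lt0n.
have le_m : gm n <= 2 ^ n by rewrite expn_gm; lia.
have := cardsD1 z [set i : vert n | i < gm n].
by rewrite card_ord_ltn // inE z0 gm_gt0 => /= E; rewrite [in RHS]E add1n.
Qed.

Lemma resolvingE (U : {set vert n}) :
  resolving U = (#|Pstar :\: U| <= 1) && (#|Hset :\: U| <= 1).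
Proof.
apply/idP/andP => [resU | [PU HU]].
  by split; apply: resolving_twins resU; [exact: Pstar_twins | exact: Hset_twins].
have gm_gt2 : 2 < gm n by have := gm_ge4 hn; lia.
have [p pU pP] : exists2 p, p \in U & p \in Pstar.
  by apply: meets_of_card_setD_le1 PU; rewrite card_Pstar; lia.
have [h hU hH] : exists2 h, h \in U & h \in Hset.
  by apply: meets_of_card_setD_le1 HU; rewrite card_Hset; lia.
apply/forallP => v; apply/forallP => w; apply/implyP => vw; apply/exists_inP.
case vU: (v \in U).
  have wv : w != v by rewrite eq_sym.
  by exists v; rewrite // !gdistE eqxx (negbTE wv); case: ifP.
case wU: (w \in U).
  by exists w; rewrite // !gdistE eqxx (negbTE vw); case: ifP.
have notin_both S : #|S :\: U| <= 1 -> v \in S -> w \in S -> False.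
  move=> /card_le1_eqP SU vS wS; move/eqP: vw; apply; apply: SU; by rewrite inE ?vU ?wU.
suff [u uU neq] : exists2 u, u \in U & power_related n v u != power_related n w u.
  exists u; rewrite // eq_gdist_offdiag //.
    by apply: contraFneq vU => <-.
  by apply: contraFneq wU => <-.
have [eq_lt | ] := eqVneq (v < gm n) (w < gm n); last first.
  by exists p; rewrite // !power_related_Pstar.
exists h; rewrite // !power_related_Hset //.
have [ltv | lev] := ltnP v (gm n); last first.
  by case: (notin_both Hset); rewrite // inE // leqNgt -eq_lt -leqNgt.
have ltw : w < gm n by rewrite -eq_lt.
case: (val v =P 0) => v0; case: (val w =P 0) => w0 //.
  by case/negP: vw; apply/eqP/val_inj; rewrite /= v0 w0.
by case: (notin_both Pstar PU); rewrite inE lt0n ?ltv ?ltw andbT; apply/eqP.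
Qed.

End PowerGraph.

Section SubsetSums.

Local Open Scope ring_scope.
Variables (R : pzSemiRingType) (T : finType) (x : R).

Lemma sum_expr_card_setU (A B : {set T}) (P Q : pred {set T}) : [disjoint A & B] ->
  \sum_(U : {set T} | (U \subset A :|: B) && P (U :&: A) && Q (U :&: B)) x ^+ #|U| =
    (\sum_(U : {set T} | (U \subset A) && P U) x ^+ #|U|) *
    \sum_(U : {set T} | (U \subset B) && Q U) x ^+ #|U|.
Proof.
move=> dAB; rewrite big_distrlr pair_big /=.
rewrite (reindex_onto (fun CD : {set T} * {set T} => CD.1 :|: CD.2)
  (fun U => (U :&: A, U :&: B))) /=; last first.
  by move=> U /andP[/andP[/setIidPl UAB _] _]; rewrite -setIUr.
rewrite (eq_bigl (fun CD : {set T} * {set T} =>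
  ((CD.1 \subset A) && P CD.1) && ((CD.2 \subset B) && Q CD.2))).
  apply: eq_bigr => -[C D] /andP[/andP[CA _] /andP[DB _]] /=.
  by rewrite cardsU (disjoint_setI0 (disjointW CA DB dAB)) cards0 subn0 exprD.
move=> [C D] /=; have [/andP[CA DB] | NCD] := boolP ((C \subset A) && (D \subset B)).
  have eC : (C :|: D) :&: A = C.
    by rewrite setIUl (setIidPl CA) (disjoint_setI0 (disjointWl DB _)) ?setU0 // disjoint_sym.
  have eD : (C :|: D) :&: B = D.
    by rewrite setIUl (setIidPl DB) (disjoint_setI0 (disjointWl CA dAB)) set0U.
  by rewrite eC eD eqxx setUSS // CA DB !andbT.
apply/idP/idP => [/andP[_ /eqP[eC eD]] | /and3P[/andP[CA _] DB _]]; case/negP: NCD.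
  by rewrite -eC -eD !subsetIr.
by rewrite CA DB.
Qed.

Lemma sum_expr_card_cosubset1 (A : {set T}) :
  \sum_(U : {set T} | (U \subset A) && (#|A :\: U| <= 1)%N) x ^+ #|U| =
    x ^+ #|A| + x ^+ #|A|.-1 *+ #|A|.
Proof.
rewrite (bigD1 A) ?subxx ?setDv ?cards0 //=; congr (_ + _).
rewrite (eq_bigl (mem [set A :\ a | a in A])) => [|U].
  rewrite big_imset /= => [|a b aA bA eab]; last first.
    apply/eqP; apply: contraT => ab; have : a \in A :\ b by rewrite !inE ab.
    by rewrite -eab !inE eqxx.
  by rewrite (eq_bigr (fun _ => x ^+ #|A|.-1)) ?sumr_const // => a aA; rewrite (cardsD1 a A) aA.
rewrite inE; apply/idP/imsetP => [/andP[/andP[UA leAU] nUA] | [a aA ->]].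
  have /cards1P[a Ea] : #|A :\: U| == 1%N.
    by rewrite eqn_leq leAU card_gt0 setD_eq0; apply: contra nUA => AU; rewrite eqEsubset UA.
  have /setDP[aA _] : a \in A :\: U by rewrite Ea set11.
  by exists a; rewrite // -Ea setDDr setDv set0U; apply/esym/setIidPr.
rewrite subsetDl setDDr setDv set0U (leq_trans (subset_leq_card (subsetIr _ _))) ?cards1 //=.
by apply: contraTneq aA => /setP/(_ a); rewrite !inE eqxx => <-.
Qed.

Lemma sum_expr_card_subset1 (a : T) :
  \sum_(U : {set T} | U \subset [set a]) x ^+ #|U| = 1 + x.
Proof.
rewrite (eq_bigl (mem (set0 |: [set [set a]]))) => [|U]; last by rewrite !inE subset1 orbC.
by rewrite big_setU1 ?big_set1 ?cards0 ?cards1 //= inE eq_sym -cards_eq0 cards1.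
Qed.

End SubsetSums.

Local Open Scope ring_scope.

Lemma resolving_polyE n : resolving_poly n = \sum_(U : {set vert n} | resolving U) 'X^#|U|.
Proof.
set N := #|vert n|.
have md_le (U : {set vert n}) : resolving U -> (metric_dim n <= #|U|)%N.
  by move=> resU; have := @bigmin_le_cond _ nat _ N U (@resolving n) (fun U => #|U|) resU.
have md_leN : (metric_dim n <= N.+1)%N.
  by apply: leqW; have := @bigmin_le_id _ nat _ (index_enum _) N (@resolving n) (fun U => #|U|).
have fiber k : (num_resolving n k)%:R *: 'X^k =
    \sum_(U : {set vert n} | resolving U && (#|U| == k)) 'X^#|U| :> {poly int}.
  rewrite scaler_nat /num_resolving -sumr_const.
  by apply: eq_big => U; rewrite ?inE // => /andP[_ /eqP->].
rewrite /resolving_poly (eq_bigr _ (fun k _ => fiber k)).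
pose size_ord (U : {set vert n}) := Ordinal (max_card U : (#|U| < N.+1)%N).
rewrite (partition_big size_ord xpredT) //=.
rewrite -(big_mkord xpredT (fun k => \sum_(U | resolving U && (#|U| == k)) 'X^#|U|)).
rewrite [RHS](big_cat_nat (leq0n (metric_dim n)) md_leN) /=.
rewrite [X in _ = X + _]big_nat_cond [X in _ = X + _]big1 ?add0r //.
move=> k /andP[/andP[_ lt_k_md] _]; apply: big1 => U /andP[/md_le le_md /eqP eq_k].
by move: lt_k_md; rewrite -eq_k ltnNge le_md.
Qed.

Lemma resolving_poly_factor n : (2 < n)%N ->
  resolving_poly n = ('X^(gm n) + 'X^((gm n).-1) *+ gm n) *
    (('X^((gm n).-1) + 'X^((gm n).-2) *+ (gm n).-1) * (1 + 'X)).
Proof.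
move=> hn; have [z z0] := exists_vert0 n.
have setDI (A B U : {set vert n}) : A \subset B -> A :\: (U :&: B) = A :\: U.
  by rewrite -setD_eq0 setDIr => /eqP->; rewrite setU0.
have partT : Hset n :|: (Pstar n :|: [set z]) = [set: vert n].
  by apply/setP => x; rewrite !inE -val_eqE z0 /=; lia.
have dHPz : [disjoint Hset n & Pstar n :|: [set z]].
  rewrite -setI_eq0; apply/eqP/setP => x; rewrite !inE -val_eqE z0 /=.
  by apply/negbTE/negP; have := gm_gt0 n; lia.
have dPz : [disjoint Pstar n & [set z]].
  rewrite -setI_eq0; apply/eqP/setP => x; rewrite !inE -val_eqE z0 /=.
  by apply/negbTE/negP; lia.
pose P (B : {set vert n}) := (#|Pstar n :\: B| <= 1)%N.
pose H (B : {set vert n}) := (#|Hset n :\: B| <= 1)%N.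
rewrite resolving_polyE (eq_bigl (fun U : {set vert n} =>
    (U \subset Hset n :|: (Pstar n :|: [set z])) &&
    H (U :&: Hset n) && P (U :&: (Pstar n :|: [set z])))) => [|U]; last first.
  by rewrite partT subsetT resolvingE // /P /H (setDI _ _ _ (subxx _)) setDI ?subsetUl // andbC.
rewrite (@sum_expr_card_setU _ _ 'X _ _ H P dHPz) sum_expr_card_cosubset1 card_Hset //.
congr (_ * _); rewrite (eq_bigl (fun U : {set vert n} =>
    (U \subset Pstar n :|: [set z]) && P (U :&: Pstar n) && xpredT (U :&: [set z])))
  => [|U]; last by rewrite andbT /P setDI.
rewrite (@sum_expr_card_setU _ _ 'X _ _ P xpredT dPz) sum_expr_card_cosubset1 card_Pstar //.
by congr (_ * _); rewrite -(sum_expr_card_subset1 _ z); apply: eq_bigl => U; rewrite andbT.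
Qed.

Lemma resolving_poly_expand m : (2 <= m)%N ->
  ('X^m + 'X^(m.-1) *+ m) * (('X^(m.-1) + 'X^(m.-2) *+ m.-1) * (1 + 'X)) =
    'X^(2 * m) + (2 * m)%:R *: 'X^(2 * m - 1)
    + (m%:R ^+ 2 + m%:R - 1) *: 'X^(2 * m - 2)
    + (m%:R ^+ 2 - m%:R) *: 'X^(2 * m - 3) :> {poly int}.
Proof.
case: m => [|[|r]] // _; rewrite /= -!mul_polyC.
have -> : (2 * r.+2 - 1 = (r + r).+3)%N by lia.
have -> : (2 * r.+2 - 2 = (r + r).+2)%N by lia.
have -> : (2 * r.+2 - 3 = (r + r).+1)%N by lia.
have -> : (2 * r.+2 = (r + r).+4)%N by lia.
by rewrite !exprS exprD; ring.
Qed.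

Theorem mainTheorem7 (n : nat) (hn : (3 <= n)%N) :
  resolving_poly n =
    'X^(2 ^ n) + (2 ^ n)%:R *: 'X^(2 ^ n - 1)
    + ((2 : int) ^+ (2 * n - 2) + 2 ^+ (n - 1) - 1) *: 'X^(2 ^ n - 2)
    + ((2 : int) ^+ (2 * n - 2) - 2 ^+ (n - 1)) *: 'X^(2 ^ n - 3).
Proof.
have eN : (2 ^ n = 2 * gm n)%N by apply: expn_gm; lia.
have e1 : (2 : int) ^+ (n - 1) = (gm n)%:R by rewrite natrX subn1.
have e2 : (2 : int) ^+ (2 * n - 2) = (gm n)%:R ^+ 2.
  by rewrite -e1 -exprM; congr (_ ^+ _); lia.
rewrite resolving_poly_factor // resolving_poly_expand ?eN ?e1 ?e2 //.
by have := gm_ge4 hn; lia.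
Qed.
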